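(* Let $f:\mathbb{R}^n\to\mathbb{R}$ be strongly convex with constant $\mu\ge0$, and let $\gamma_k>0$, $\delta_k>0$, $s_k>0$ for all $k$. Then the iterates of the random incremental penalty method surely satisfy, for all $y\in X$ and $k\ge1$, $$\|x_{k+1}-y\|^2\le(1-\mu s_k)\|x_k-y\|^2+2s_k\big(f(y)-f(x_k)\big)+\frac{s_k\gamma_k\delta_k}{2\alpha_{\min}}-2s_k\gamma_k\,\mathrm{dist}(x_k,X_{i_k})+s_k^2\big(\|\tilde\nabla f(x_k)\|+\gamma_k\big)^2.$$
   Context: Let $a_1,\dots,a_m\in\mathbb{R}^n$ be nonzero vectors and $b_1,\dots,b_m\in\mathbb{R}$; $X_i=\{x:\langle a_i,x\rangle-b_i\le0\}$, $X=\bigcap_{i=1}^mX_i$ (assumed nonempty), $\alpha_{\min}=\min_i\|a_i\|$. Strong convexity with constant $\mu\ge0$ means $f(u)\ge f(v)+\langle g,u-v\rangle+\frac{\mu}{2}\|u-v\|^2$ for all $u,v$ and all $g\in\partial f(v)$ ($\mu=0$: convex). For $\delta>0$, nonzero $a$ and scalar $b$: $h_\delta(x;a,b)=\frac{\langle a,x\rangle-b}{\|a\|}$ if $\langle a,x\rangle-b>\delta$, $\frac{(\langle a,x\rangle-b+\delta)^2}{4\delta\|a\|}$ if $-\delta\le\langle a,x\rangle-b\le\delta$, $0$ if $\langle a,x\rangle-b<-\delta$; its gradient is $\nabla h_\delta(x;a,b)=\frac{1}{\|a\|}p'_\delta(\langle a,x\rangle-b)\,a$ with $p'_\delta(s)=1$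 for $s>\delta$, $\frac{s+\delta}{2\delta}$ for $|s|\le\delta$, $0$ for $s<-\delta$. Random incremental penalty method: from an initial point $x_1$, for $k\ge1$, $x_{k+1}=x_k-s_k\big[\tilde\nabla f(x_k)+\gamma_k\nabla h_{\delta_k}(x_k;a_{i_k},b_{i_k})\big]$, where $\tilde\nabla f(x_k)\in\partial f(x_k)$ and $i_k\in\{1,\dots,m\}$ is chosen uniformly at random. *)

From HB Require Import structures.
From mathcomp Require Import all_boot all_order all_algebra.
From mathcomp Require Import classical_sets reals.
Set Implicit Arguments. Unset Strict Implicit. Unset Printing Implicit Defensive.
Import Order.TTheory GRing.Theory Num.Theory.
Local Open Scope ring_scope.
Local Open Scope classical_set_scope.

Section Defs.
Variables (R : realType) (n : nat).

Definition dotv (u v : 'rV[R]_n) : R := \sum_(j < n) u 0 j * v 0 j.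
Definition normv (u : 'rV[R]_n) : R := Num.sqrt (dotv u u).

Definition halfspace (a : 'rV[R]_n) (b : R) : set 'rV[R]_n :=
  [set x | dotv a x - b <= 0].

Definition feasible m (a : 'I_m -> 'rV[R]_n) (b : 'I_m -> R) : set 'rV[R]_n :=
  [set x | forall j, halfspace (a j) (b j) x].

Definition distS (x : 'rV[R]_n) (S : set 'rV[R]_n) : R :=
  inf [set normv (x - z) | z in S].

(* alpha_min = min_i ||a_i|| (inf of a finite nonempty set = its minimum) *)
Definition alpha_min m (a : 'I_m -> 'rV[R]_n) : R :=
  inf [set normv (a j) | j in [set: 'I_m]].

Definition subdiff (f : 'rV[R]_n -> R) (v : 'rV[R]_n) : set 'rV[R]_n :=
  [set g | forall u, f v + dotv g (u - v) <= f u].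

Definition strongly_convex (mu : R) (f : 'rV[R]_n -> R) : Prop :=
  forall u v g, subdiff f v g ->
    f v + dotv g (u - v) + mu / 2 * normv (u - v) ^+ 2 <= f u.

Definition dpen (delta s : R) : R :=
  if delta < s then 1 else if s < - delta then 0 else (s + delta) / (2 * delta).

Definition hpen (delta : R) (a : 'rV[R]_n) (b : R) (x : 'rV[R]_n) : R :=
  let t := dotv a x - b in
  if delta < t then t / normv a
  else if t < - delta then 0 else (t + delta) ^+ 2 / (4 * delta * normv a).

Definition grad_hpen (delta : R) (a : 'rV[R]_n) (b : R) (x : 'rV[R]_n) : 'rV[R]_n :=
  (dpen delta (dotv a x - b) / normv a) *: a.

End Defs.

From HB Require Import structures.
From mathcomp Require Import all_boot all_order all_algebra.
From mathcomp Require Import classical_sets reals.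
From mathcomp Require Import ring lra.
Import Order.TTheory GRing.Theory Num.Theory.
Local Open Scope ring_scope.
Local Open Scope classical_set_scope.

Set Implicit Arguments. Unset Strict Implicit. Unset Printing Implicit Defensive.

(* Write V = x_k - y and G = grad h_delta(x_k) = (p / |a|) a with 0 <= p <= 1, and
   expand |V - s (g + gamma G)|^2.  Strong convexity bounds <g, V> below by
   f(x_k) - f(y) + mu/2 |V|^2.  Since y lies in the half-space,
   <G, V> >= p t / |a| with t = <a, x_k> - b; the scalar inequality
   p t >= max(t, 0) - delta/8 and |a| dist(x_k, X_i) <= max(t, 0) then give
   <G, V> >= dist(x_k, X_i) - delta/(8 |a|).  Finally |G| <= 1 bounds the
   quadratic term by (|g| + gamma)^2. *)

Section InnerProduct.
Variables (R : realType) (n : nat).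
Implicit Types (u v w : 'rV[R]_n) (c : R).

Lemma dotvC u v : dotv u v = dotv v u.
Proof. by apply: eq_bigr => j _; rewrite mulrC. Qed.

Lemma dotvDl u v w : dotv (u + v) w = dotv u w + dotv v w.
Proof. by rewrite /dotv -big_split; apply: eq_bigr => j _; rewrite mxE mulrDl. Qed.

Lemma dotvZl c u v : dotv (c *: u) v = c * dotv u v.
Proof. by rewrite /dotv mulr_sumr; apply: eq_bigr => j _; rewrite mxE mulrA. Qed.

Lemma dotvNl u v : dotv (- u) v = - dotv u v.
Proof. by rewrite -scaleN1r dotvZl mulN1r. Qed.

Lemma dotvBl u v w : dotv (u - v) w = dotv u w - dotv v w.
Proof. by rewrite dotvDl dotvNl. Qed.

Lemma dotvZr c u v : dotv u (c *: v) = c * dotv u v.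
Proof. by rewrite dotvC dotvZl dotvC. Qed.

Lemma dotvBr u v w : dotv u (v - w) = dotv u v - dotv u w.
Proof. by rewrite dotvC dotvBl !(dotvC u). Qed.

Lemma dotv_ge0 u : 0 <= dotv u u.
Proof. by apply: sumr_ge0 => j _; rewrite -expr2 sqr_ge0. Qed.

Lemma dotv_eq0 u : (dotv u u == 0) = (u == 0).
Proof.
apply/eqP/eqP => [u0|->]; last by rewrite /dotv big1 // => j _; rewrite mxE mul0r.
apply/rowP => j; rewrite mxE; apply/eqP; rewrite -sqrf_eq0 expr2; apply/eqP.
by apply: (psumr_eq0P _ u0) => // i _; rewrite -expr2 sqr_ge0.
Qed.

Lemma normv_ge0 u : 0 <= normv u.
Proof. exact: sqrtr_ge0. Qed.

Lemma normv_sq u : normv u ^+ 2 = dotv u u.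
Proof. by rewrite sqr_sqrtr // dotv_ge0. Qed.

Lemma normv0 : normv (0 : 'rV[R]_n) = 0.
Proof.
have /eqP dot00 : dotv (0 : 'rV[R]_n) 0 == 0 by rewrite dotv_eq0.
by rewrite /normv dot00 sqrtr0.
Qed.

Lemma normv_gt0 u : u != 0 -> 0 < normv u.
Proof. by move=> u0; rewrite sqrtr_gt0 lt_def dotv_eq0 u0 dotv_ge0. Qed.

Lemma normvZ c u : normv (c *: u) = `|c| * normv u.
Proof. by rewrite /normv dotvZl dotvZr mulrA -expr2 sqrtrM ?sqr_ge0 // sqrtr_sqr. Qed.

Lemma normvN u : normv (- u) = normv u.
Proof. by rewrite -scaleN1r normvZ normrN1 mul1r. Qed.

Lemma normvB_sq u v :
  normv (u - v) ^+ 2 = normv u ^+ 2 - 2 * dotv v u + normv v ^+ 2.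
Proof. by rewrite !normv_sq !dotvBl !dotvBr (dotvC u v); ring. Qed.

Lemma cauchy_schwarz u v : dotv u v <= normv u * normv v.
Proof.
have [->|v0] := eqVneq v 0.
  by rewrite normv0 mulr0 /dotv big1 // => j _; rewrite mxE mulr0.
set A := dotv u u; set B := dotv u v; set C := dotv v v.
have C_gt0 : 0 < C by rewrite lt_def dotv_eq0 v0 dotv_ge0.
have B2_le : B ^+ 2 <= A * C.
  have := dotv_ge0 (C *: u - B *: v).
  rewrite !dotvBl !dotvBr !dotvZl !dotvZr -/A -/B -/C (dotvC v u) -/B.
  have -> : C * (C * A) - C * (B * B) - (B * (C * B) - B * (B * C))
            = C * (A * C - B ^+ 2) by ring.
  by rewrite pmulr_rge0 // subr_ge0.
rewrite /normv -sqrtrM ?dotv_ge0 // -/A -/C.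
by rewrite (le_trans (ler_norm B)) // -sqrtr_sqr ler_sqrt // mulr_ge0 ?dotv_ge0.
Qed.

Lemma normvD_le u v : normv (u + v) <= normv u + normv v.
Proof.
rewrite -(ler_pXn2r (n := 2)) ?nnegrE ?addr_ge0 ?normv_ge0 //.
rewrite -[v]opprK normvB_sq normvN dotvNl sqrrD mulrN !opprK.
by rewrite lerD2r lerD2l -[X in _ <= X]mulr_natl ler_pM2l // dotvC cauchy_schwarz.
Qed.

End InnerProduct.

Section Distance.
Variables (R : realType) (n : nat).
Implicit Types (a x z : 'rV[R]_n) (b : R) (S : set 'rV[R]_n).

Lemma distS_le x z S : S z -> distS x S <= normv (x - z).
Proof.
move=> Sz; apply: ge_inf; last by exists z.
by exists 0 => _ [w _ <-]; exact: normv_ge0.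
Qed.

Lemma distS_halfspace_le a b x : a != 0 ->
  normv a * distS x (halfspace a b) <= Num.max (dotv a x - b) 0.
Proof.
move=> a0; have a_gt0 := normv_gt0 a0; set t := dotv a x - b.
have [t_le0|t_gt0] := leP t 0.
  have := distS_le x (t_le0 : halfspace a b x).
  by rewrite subrr normv0 => D_le0; rewrite mulr_ge0_le0 ?normv_ge0.
pose z := x - (t / normv a ^+ 2) *: a.
have Hz : halfspace a b z.
  rewrite /halfspace /= /z dotvBr dotvZr -normv_sq -/t.
  have -> : dotv a x - t / normv a ^+ 2 * normv a ^+ 2 - b = 0.
    by rewrite divfK ?expf_neq0 ?gt_eqF // /t; ring.
  by [].
have := distS_le x Hz; rewrite /z opprB addrC subrK normvZ ger0_norm; last first.
  by rewrite divr_ge0 ?sqr_ge0 ?ltW.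
rewrite -(ler_pM2l a_gt0) => /le_trans; apply.
suff -> : normv a * (t / normv a ^+ 2 * normv a) = t by [].
by field; rewrite gt_eqF.
Qed.

Lemma alpha_min_le m (a : 'I_m -> 'rV[R]_n) j : alpha_min a <= normv (a j).
Proof.
apply: ge_inf; last by exists j.
by exists 0 => _ [w _ <-]; exact: normv_ge0.
Qed.

Lemma alpha_min_gt0 m (a : 'I_m -> 'rV[R]_n) :
  (0 < m)%N -> (forall j, a j != 0) -> 0 < alpha_min a.
Proof.
move=> m_gt0 a_neq0; pose j0 : 'I_m := Ordinal m_gt0.
have [j _ j_min] := @arg_minP _ R _ j0 predT (fun j => normv (a j)) isT.
apply: (lt_le_trans (normv_gt0 (a_neq0 j))).
apply: lb_le_inf; first by exists (normv (a j0)), j0.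
by move=> _ [w _ <-]; apply: j_min.
Qed.

End Distance.

Section Penalty.
Variables (R : realType) (n : nat).
Implicit Types (d t b : R) (a x y : 'rV[R]_n).

Lemma dpen_ge0 d t : 0 < d -> 0 <= dpen d t.
Proof.
move=> d_gt0; rewrite /dpen; case: ifP => // _; case: ifP => // /negbT.
by rewrite -leNgt => t_ge; rewrite divr_ge0 //; lra.
Qed.

Lemma dpen_le1 d t : 0 < d -> dpen d t <= 1.
Proof.
move=> d_gt0; rewrite /dpen; case: ifP => // /negbT; rewrite -leNgt => t_le.
by case: ifP => // _; rewrite ler_pdivrMr ?mulr_gt0 //; lra.
Qed.

(* On the quadratic piece, p t - max(t, 0) + d/8 equals (t -/+ d/2)^2 / (2 d). *)
Lemma dpen_mul_ge d t : 0 < d -> Num.max t 0 - d / 8 <= dpen d t * t.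
Proof.
move=> d_gt0; rewrite /dpen; case: ifPn => [t_gt|]; first by rewrite max_l; lra.
rewrite -leNgt => t_le; case: ifPn => [t_lt|]; first by rewrite max_r; lra.
rewrite -leNgt => t_ge; rewrite -subr_ge0.
have [t_le0|t_gt0] := leP t 0.
  have -> : (t + d) / (2 * d) * t - (0 - d / 8) = (t + d / 2) ^+ 2 / (2 * d).
    by field; rewrite gt_eqF.
  by rewrite divr_ge0 ?sqr_ge0 ?mulr_ge0 ?ltW.
have -> : (t + d) / (2 * d) * t - (t - d / 8) = (t - d / 2) ^+ 2 / (2 * d).
  by field; rewrite gt_eqF.
by rewrite divr_ge0 ?sqr_ge0 ?mulr_ge0 ?ltW.
Qed.

Lemma normv_grad_hpen_le1 d a b x : 0 < d -> normv (grad_hpen d a b x) <= 1.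
Proof.
move=> d_gt0; rewrite /grad_hpen normvZ.
have [->|a0] := eqVneq a 0; first by rewrite normv0 mulr0.
have a_gt0 := normv_gt0 a0.
rewrite ger0_norm; last by rewrite divr_ge0 ?dpen_ge0 ?normv_ge0.
by rewrite divfK ?gt_eqF ?dpen_le1.
Qed.

Lemma grad_hpen_dot_ge d a b x y : 0 < d -> a != 0 -> halfspace a b y ->
  distS x (halfspace a b) - d / (8 * normv a) <= dotv (grad_hpen d a b x) (x - y).
Proof.
move=> d_gt0 a0 Hy; have a_gt0 := normv_gt0 a0.
set t := dotv a x - b; set p := dpen d t.
have p_ge0 : 0 <= p by exact: dpen_ge0.
have dist_le : normv a * distS x (halfspace a b) <= Num.max t 0.
  exact: distS_halfspace_le.
have pt_ge : Num.max t 0 - d / 8 <= p * t by exact: dpen_mul_ge.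
rewrite /grad_hpen dotvZl -/t -/p.
have -> : distS x (halfspace a b) - d / (8 * normv a)
          = (normv a * distS x (halfspace a b) - d / 8) / normv a.
  by field; rewrite gt_eqF.
rewrite mulrAC ler_pM2r ?invr_gt0 //.
have : t <= dotv a (x - y) by move: Hy; rewrite /halfspace /= dotvBr /t; lra.
move/(ler_wpM2l p_ge0); apply: le_trans; apply: le_trans pt_ge.
by rewrite lerD2r.
Qed.

End Penalty.

Lemma strongly_convex_dot_ge (R : realType) (n : nat) (mu : R)
    (f : 'rV[R]_n -> R) (u v g : 'rV[R]_n) :
  strongly_convex mu f -> subdiff f v g ->
  f v - f u + mu / 2 * normv (v - u) ^+ 2 <= dotv g (v - u).
Proof.
move=> sc gv; have := sc u v g gv.
rewrite -(opprB v u) normvN -scaleN1r dotvZr; lra.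
Qed.
Theorem lemma8 (R : realType) (n m : nat)
  (a : 'I_m -> 'rV[R]_n) (b : 'I_m -> R)
  (f : 'rV[R]_n -> R) (mu : R)
  (gamma delta s : nat -> R)
  (x gf : nat -> 'rV[R]_n) (idx : nat -> 'I_m) :
  (0 < m)%N ->
  (forall j, a j != 0) ->
  (exists z, feasible a b z) ->
  0 <= mu -> strongly_convex mu f ->
  (forall k, 0 < gamma k) -> (forall k, 0 < delta k) -> (forall k, 0 < s k) ->
  (forall k, (1 <= k)%N -> subdiff f (x k) (gf k)) ->
  (forall k, (1 <= k)%N ->
     x k.+1 = x k - s k *: (gf k + gamma k *: grad_hpen (delta k) (a (idx k)) (b (idx k)) (x k))) ->
  forall (y : 'rV[R]_n) (k : nat), feasible a b y -> (1 <= k)%N ->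
    normv (x k.+1 - y) ^+ 2 <=
      (1 - mu * s k) * normv (x k - y) ^+ 2
      + 2 * s k * (f y - f (x k))
      + s k * gamma k * delta k / (2 * alpha_min a)
      - 2 * s k * gamma k * distS (x k) (halfspace (a (idx k)) (b (idx k)))
      + s k ^+ 2 * (normv (gf k) + gamma k) ^+ 2.
Proof.
move=> m_gt0 a_neq0 _ _ sc gamma_gt0 delta_gt0 s_gt0 gf_sub step y k Xy k_ge1.
set i := idx k; set g := gf k; set V := x k - y.
set G := grad_hpen (delta k) (a i) (b i) (x k).
set D := distS (x k) (halfspace (a i) (b i)); set al := alpha_min a.
have al_gt0 : 0 < al by exact: alpha_min_gt0.
have conv : f (x k) - f y + mu / 2 * normv V ^+ 2 <= dotv g V.
  exact: strongly_convex_dot_ge (gf_sub k k_ge1).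
have pen : D - delta k / (4 * al) <= dotv G V.
  apply: le_trans (grad_hpen_dot_ge (x k) (delta_gt0 k) (a_neq0 i) (Xy i)).
  rewrite lerD2l lerN2 ler_pM2l // lef_pV2 ?posrE ?mulr_gt0 ?normv_gt0 //.
  by apply: ler_pM; rewrite ?ler0n ?ler_nat ?alpha_min_le ?(ltW al_gt0).
have dir_sq_le : normv (g + gamma k *: G) ^+ 2 <= (normv g + gamma k) ^+ 2.
  rewrite ler_pXn2r ?nnegrE ?addr_ge0 ?normv_ge0 ?(ltW (gamma_gt0 k)) //.
  apply: le_trans (normvD_le _ _) _; rewrite normvZ gtr0_norm // lerD2l.
  by rewrite ler_piMr ?(ltW (gamma_gt0 k)) ?normv_grad_hpen_le1.
have -> : x k.+1 - y = V - s k *: (g + gamma k *: G) by rewrite step // addrAC.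
rewrite normvB_sq dotvZl dotvDl dotvZl normvZ gtr0_norm // exprMn.
have -> : s k * gamma k * delta k / (2 * al) = 2 * s k * gamma k * (delta k / (4 * al)).
  by field; rewrite gt_eqF.
have := ler_wpM2l (ltW (mulr_gt0 (mulr_gt0 (ltr0n R 2) (s_gt0 k)) (gamma_gt0 k))) pen.
have := ler_wpM2l (ltW (mulr_gt0 (ltr0n R 2) (s_gt0 k))) conv.
have := ler_wpM2l (sqr_ge0 (s k)) dir_sq_le.
lra.
Qed.
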